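(* Let $\mathcal I$ be a decreasing information set of length $n=2^m$ and let $M$ be an $m\times m$ upper-triangular binary matrix such that $\pi=\varphi(M)$ is an automorphism of $C(\mathcal I)$. For $i\in\{0,1\}$ let $\mathcal I_i=\mathcal I(\mathrm{Ind}_m(a_m=i))$ (an information set of length $2^{m-1}$), and let $\pi'=\varphi(M([1,m-1],[1,m-1]))$, a permutation of $\{0,\dots,2^{m-1}-1\}$. If $\pi$ commutes with $\mathrm{SC}_{\mathcal I}$, then $\pi'$ commutes with both $\mathrm{SC}_{\mathcal I_1}$ and $\mathrm{SC}_{\mathcal I_0}$.
   Context: Setup. Let $m\ge 1$, $n=2^m$. For any $k\ge1$, each index $z\in\{0,\dots,2^k-1\}$ is identified with the vector $a(z)=(a_1,\dots,a_k)^T\in\mathbb F_2^k$ determined by $z=\sum_{i=1}^k 2^{i-1}(1-a_i)$ (i.e. $a$ is the binary expansion of $2^k-1-z$, $a_1$ least significant), and with the monomial $x_1^{a_1}\cdots x_k^{a_k}$. Let $F=\begin{bmatrix}1&0\\1&1\end{bmatrix}$, $G_k=F^{\otimes k}$ with rows indexed $0,\dots,2^k-1$. For an information set $\mathcal I\subseteq\{0,\dots,2^k-1\}$ (equivalently a subset of $\mathbb F_2^k$), $C(\mathcal I)$ is the binary code spanned by the rows of $G_k$ with index in $\mathcal I$, and $\mathcal F$ is the complement of $\mathcal I$. Partial order on monomials: for monomials of equal degree, $x_{i_1}\cdots x_{i_t}\preccurlyeq x_{j_1}\cdots x_{j_t}$ (with $i_1<\dots<i_t$, $j_1<\dots<j_t$)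 iff $i_l\le j_l$ for all $l$; in general $f\preccurlyeq g$ iff $f\preccurlyeq g'$ for some divisor $g'$ of $g$ of the same degree as $f$. $\mathcal I$ is decreasing if $f\in\mathcal I$ and $g\preccurlyeq f$ imply $g\in\mathcal I$. A permutation $\pi$ of indices acts on vectors by $\pi(c)=(c_{\pi(0)},\dots,c_{\pi(N-1)})$; it is an automorphism of a code $C$ if $\pi(C)=C$. For $N\in GL_k(\mathbb F_2)$, $\varphi(N)$ is the permutation of $\{0,\dots,2^k-1\}$ sending $z$ to the index $z'$ with $a(z')=Na(z)$. A binary matrix $M$ is upper-triangular if $M(i,i)=1$ and $M(i,j)=0$ for $j<i$. $M([a,b],[c,d])$ is the submatrix with rows $a..b$ and columns $c..d$. SC decoding (length $2^k$). Let $f(x,y)=\log\frac{e^{x+y}+1}{e^x+e^y}$ and $g(u,x,y)=(-1)^ux+y$. The map $\mathrm{SC}_{\mathcal I}:\mathbb R^{2^k}\to\mathbb F_2^{2^k}$: given $y$ put $L_{i,k}=y_i$. For $0\le t<k$ and each $i$ with $\lfloor i/2^t\rfloor$ even: $L_{i,t}=f(L_{i,t+1},L_{i+2^t,t+1})$, $L_{i+2^t,t}=g(u_{i,t},L_{i,t+1},L_{i+2^t,t+1})$, $u_{i,t+1}=u_{i,t}\oplus u_{i+2^t,t}$, $u_{i+2^t,t+1}=u_{i+2^t,t}$. At stage $0$, $u_{i,0}=0$ if $i\in\mathcal F$ or $L_{i,0}\ge 0$, and $1$ otherwise. Quantities are computed in successive-cancellation order (stage-0 decisions for $i=0,1,\dots$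 in increasing order, each quantity computed once its inputs are available). The output is $(u_{i,k})_i$. A permutation $\pi$ commutes with $\mathrm{SC}_{\mathcal I}$ if $\mathrm{SC}_{\mathcal I}(\pi(y))=\pi(\mathrm{SC}_{\mathcal I}(y))$ for all $y$. Subcodes. For $i_1<\dots<i_t$ in $\{1,\dots,m\}$ and $c_{i_j}\in\mathbb F_2$, $\mathrm{Ind}_m(a_{i_1}=c_{i_1},\dots,a_{i_t}=c_{i_t})=\{a\in\mathbb F_2^m: a_{i_j}=c_{i_j}\ \forall j\}$. For such a set $A$, $\mathcal I(A)\subseteq\mathbb F_2^{m-t}$ is the set of vectors obtained from the elements of $\mathcal I\cap A$ by deleting coordinates $i_1,\dots,i_t$, regarded as an information set of length $2^{m-t}$. *)

From Stdlib Require Import Reals.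
From mathcomp Require Import all_boot all_algebra.
Set Implicit Arguments.
Unset Strict Implicit.
Unset Printing Implicit Defensive.

(* Vectors of length 2^k are represented as functions on nat; only the
   indices 0 .. 2^k-1 are meaningful. Information sets are boolean
   predicates on indices. *)

(* a_bit k z j = a_{j+1}(z): bit j (0-based, least significant first) of
   2^k - 1 - z. *)
Definition a_bit (k z j : nat) : bool := odd ((2 ^ k - 1 - z) %/ 2 ^ j).

Definition a_vec (k z : nat) : 'cV['F_2]_k :=
  \col_(j < k) (if a_bit k z j then (GRing.one _) else GRing.zero).

Definition idx (k : nat) (v : 'cV['F_2]_k) : nat :=
  \sum_(j < k) (if v j ord0 == GRing.zero then 2 ^ j else 0).

Definition phi (k : nat) (N : 'M['F_2]_k) (z : nat) : nat :=
  idx (N *m a_vec k z).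

Definition upper_tri (k : nat) (M : 'M['F_2]_k) : Prop :=
  (forall i : 'I_k, M i i = (GRing.one _)) /\
  (forall i j : 'I_k, (j < i)%N -> M i j = GRing.zero).

Definition topleft (k : nat) (M : 'M['F_2]_k.+1) : 'M['F_2]_k :=
  \matrix_(i < k, j < k) M (widen_ord (leqnSn k) i) (widen_ord (leqnSn k) j).

(* monomial of index z : the set of variables x_{j+1} with a_{j+1}(z) = 1 *)
Definition mono (k z : nat) : {set 'I_k} := [set j : 'I_k | a_bit k z j].

Definition slist (k : nat) (S : {set 'I_k}) : seq nat :=
  sort leq [seq nat_of_ord j | j <- enum S].

Definition mono_le_eq (k : nat) (S T : {set 'I_k}) : bool :=
  (#|S| == #|T|) &&
  all (fun l => nth 0 (slist S) l <= nth 0 (slist T) l) (iota 0 #|S|).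

Definition mono_le (k : nat) (S T : {set 'I_k}) : bool :=
  [exists T' : {set 'I_k}, (T' \subset T) && mono_le_eq S T'].

Definition info_set (k : nat) (Is : pred nat) : Prop :=
  forall z, Is z -> z < 2 ^ k.

Definition decreasing_info (k : nat) (Is : pred nat) : Prop :=
  forall z w, z < 2 ^ k -> w < 2 ^ k -> Is z ->
    mono_le (mono k w) (mono k z) -> Is w.

Definition Fker (r c : nat) : 'F_2 :=
  if (r == 0) && (c == 1) then GRing.zero else (GRing.one _).

(* G_k = F^{(x) k}, G_{k+1} = F (x) G_k (Kronecker product) *)
Fixpoint Gk (k : nat) : nat -> nat -> 'F_2 :=
  match k with
  | 0 => fun _ _ => (GRing.one _)
  | k'.+1 => fun r c =>
      GRing.mul (Fker (r %/ 2 ^ k') (c %/ 2 ^ k'))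
                (Gk k' (r %% 2 ^ k') (c %% 2 ^ k'))
  end.

Definition inC (k : nat) (Is : pred nat) (c : nat -> 'F_2) : Prop :=
  exists u : nat -> 'F_2,
    (forall r, r < 2 ^ k -> ~~ Is r -> u r = GRing.zero) /\
    (forall j, j < 2 ^ k ->
       c j = \big[GRing.add/GRing.zero]_(r < 2 ^ k) GRing.mul (u r) (Gk k r j)).

Definition is_aut (k : nat) (Is : pred nat) (pi : nat -> nat) : Prop :=
  (forall c, inC k Is c -> inC k Is (fun i => c (pi i))) /\
  (forall c, inC k Is c ->
     exists c', inC k Is c' /\ forall i, i < 2 ^ k -> c' (pi i) = c i).

Definition fSC (x y : R) : R :=
  ln (Rdiv (Rplus (exp (Rplus x y)) R1) (Rplus (exp x) (exp y))).

Definition gSC (u : bool) (x y : R) : R :=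
  Rplus (Rmult (pow (Ropp R1) (nat_of_bool u)) x) y.

(* Recursive form of the SC schedule: for length 2^(k'+1), stage k' pairs
   i and i + 2^k'; the first half of stage-0 decisions is an SC decoder of
   length 2^k' fed with L_{i,k'} = f(y_i, y_{i+h}), the second half one fed
   with L_{i+h,k'} = g(u_{i,k'}, y_i, y_{i+h}); finally
   u_{i,k'+1} = u_{i,k'} xor u_{i+h,k'} and u_{i+h,k'+1} = u_{i+h,k'}. *)
Fixpoint SC (k : nat) (Is : pred nat) (y : nat -> R) : nat -> bool :=
  match k with
  | 0 => fun _ => if Is 0 then (if Rle_dec R0 (y 0) then false else true)
                  else false
  | k'.+1 =>
      let h := 2 ^ k' in
      let ul := SC k' Is (fun i => fSC (y i) (y (i + h))) in
      let ur := SC k' (fun i => Is (i + h))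
                      (fun i => gSC (ul i) (y i) (y (i + h))) in
      fun i => if i < h then addb (ul i) (ur i) else ur (i - h)
  end.

Definition SC_commute (k : nat) (Is : pred nat) (pi : nat -> nat) : Prop :=
  forall (y : nat -> R) (i : nat), i < 2 ^ k ->
    SC k Is (fun j => y (pi j)) i = SC k Is y (pi i).

(* I(Ind_{k+1}(a_{k+1} = c)) as an information set of length 2^k *)
Definition subI (k : nat) (Is : pred nat) (c : bool) : pred nat :=
  fun z' => (z' < 2 ^ k) &&
    [exists z : 'I_(2 ^ k.+1),
       [&& Is z, a_bit k.+1 z k == c &
          [forall j : 'I_k, a_bit k.+1 z j == a_bit k z' j]]].

(* Split an input of length 2^(k+1) into halves (a, b).  As M is upper
   triangular, pi = phi M maps the first half onto itself and sends i + 2^k to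
   pi' i + 2^k, while SC decoding of (a, b) runs the decoder of I_1 on f(a, b)
   and then the decoder of I_0 on g(u, a, b).  With b = 0 (resp. a = 0) the
   decisions of I_1 vanish and the decoder of I_0 is applied to a (resp. b):
   this gives the claim for I_0, and shows that the decoder of I_0 does not
   distinguish pi i from pi' i.  Taking a constant and large, f(a, b) ranges
   over all LLR vectors, and commutation at i and at i + 2^k shows that the
   decoder of I_1 turns pi' into pi.  Finally I_1 is contained in I_0 because
   I is decreasing, so the decoder of I_0 fed with LLRs spelling out the
   decisions of I_1 returns them; the invariance above then replaces pi by pi'. *)

From Stdlib Require Import Reals Lra.
From mathcomp Require Import all_boot all_algebra zify.

Local Open Scope R_scope.

Definition strict_llr (b : bool) (x : R) : Prop := if b then x < 0 else 0 < x.

Lemma strict_llr_exp_sub1 b x : strict_llr b x -> strict_llr b (exp x - 1).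
Proof.
by case: b => /= h; have := exp_increasing _ _ h; rewrite exp_0; lra.
Qed.

Lemma strict_llr_ln b r : 0 < r -> strict_llr b (r - 1) -> strict_llr b (ln r).
Proof. by case: b => /= r_gt0 h; rewrite -ln_1; apply: ln_increasing; lra. Qed.

Lemma strict_llr_mul b1 b2 x y :
  strict_llr b1 x -> strict_llr b2 y -> strict_llr (b1 (+) b2) (x * y).
Proof. by case: b1; case: b2 => /= hx hy; nra. Qed.

Lemma strict_llr_divr b x d : 0 < d -> strict_llr b x -> strict_llr b (x / d).
Proof.
move=> d_gt0; have := Rinv_0_lt_compat _ d_gt0; rewrite /Rdiv.
by case: b => /= dV_gt0 hx; nra.
Qed.

Lemma fSC_0l y : fSC 0 y = 0.
Proof.
rewrite /fSC Rplus_0_l exp_0 -ln_1; congr ln.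
have ey_gt0 := exp_pos y; field; lra.
Qed.

Lemma fSC_0r x : fSC x 0 = 0.
Proof.
rewrite /fSC Rplus_0_r exp_0 -ln_1; congr ln.
have ex_gt0 := exp_pos x; field; lra.
Qed.

Lemma gSC_false x y : gSC false x y = x + y.
Proof. by rewrite /gSC /= Rmult_1_l. Qed.

Lemma fSC_strict_llr b1 b2 x y :
  strict_llr b1 x -> strict_llr b2 y -> strict_llr (b1 (+) b2) (fSC x y).
Proof.
move=> hx hy; rewrite /fSC exp_plus.
have ex_gt0 := exp_pos x; have ey_gt0 := exp_pos y.
have sum_gt0 : 0 < exp x + exp y by lra.
apply: strict_llr_ln; first by apply: Rdiv_lt_0_compat; nra.
have -> : (exp x * exp y + R1) / (exp x + exp y) - 1
          = (exp x - 1) * (exp y - 1) / (exp x + exp y) by field; lra.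
by apply: strict_llr_divr => //; apply: strict_llr_mul; apply: strict_llr_exp_sub1.
Qed.

Lemma gSC_strict_llr u b x y :
  strict_llr (u (+) b) x -> strict_llr b y -> strict_llr b (gSC u x y).
Proof. by rewrite /gSC; case: u; case: b => /= hx hy; lra. Qed.

(* Solving [(e^T s + 1) / (e^T + s) = e^v] for [s = e^w]. *)
Definition fSC_inv (T v : R) : R :=
  ln ((exp v * exp T - 1) / (exp T - exp v)).

Lemma fSC_invK T v : Rabs v < T -> fSC T (fSC_inv T v) = v.
Proof.
move=> /Rabs_def2 [v_lt_T vT_gt0].
have ev_lt : exp v < exp T by apply: exp_increasing.
have evT_gt1 : 1 < exp v * exp T.
  by rewrite -exp_plus -exp_0; apply: exp_increasing; lra.
have ev_gt0 := exp_pos v; have eT_gt0 := exp_pos T.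
rewrite /fSC /fSC_inv exp_plus exp_ln; last by apply: Rdiv_lt_0_compat; lra.
rewrite -[RHS]ln_exp; congr ln.
field; split; first lra.
have : 0 < exp T * (exp T - exp v) by apply: Rmult_lt_0_compat; lra.
lra.
Qed.

Fixpoint abs_ub (v : nat -> R) (n : nat) : R :=
  if n is n'.+1 then Rmax (abs_ub v n') (Rabs (v n') + 1) else 1.

Lemma abs_ub_gt v n j : (j < n)%N -> Rabs (v j) < abs_ub v n.
Proof.
elim: n => [|n IHn] //=; rewrite ltnS leq_eqVlt => /orP [/eqP ->|j_lt_n].
  by apply: Rlt_le_trans (Rmax_r _ _); lra.
exact: Rlt_le_trans (IHn j_lt_n) (Rmax_l _ _).
Qed.

Local Close Scope R_scope.

Lemma odd_divn_expDl k r x :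
  x < k -> odd ((2 ^ k + r) %/ 2 ^ x) = odd (r %/ 2 ^ x).
Proof.
move=> x_lt_k; have e : 2 ^ k = 2 ^ (k - x) * 2 ^ x by rewrite -expnD subnK // ltnW.
rewrite e divnDl ?dvdn_mull // mulnK ?expn_gt0 // oddD oddX.
by rewrite subn_eq0 leqNgt x_lt_k.
Qed.

Lemma eq_low_bits k x x' : x < 2 ^ k -> x' < 2 ^ k ->
  (forall j, j < k -> odd (x %/ 2 ^ j) = odd (x' %/ 2 ^ j)) -> x = x'.
Proof.
elim: k x x' => [|k IHk] x x' x_lt x'_lt bits_eq; first by move: x_lt x'_lt; lia.
have half_eq : x %/ 2 = x' %/ 2.
  apply: IHk; rewrite ?ltn_divLR -?expnSr // => j j_lt.
  by have := bits_eq j.+1 j_lt; rewrite expnS !divnMA.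
have := bits_eq 0 isT; rewrite expn0 !divn1 => odd_eq.
by rewrite (divn_eq x 2) (divn_eq x' 2) half_eq !modn2 odd_eq.
Qed.

Lemma a_bit_ge k z j : k <= j -> a_bit k z j = false.
Proof.
move=> k_le_j; rewrite /a_bit divn_small //.
have := leq_pexp2l (isT : 0 < 2) k_le_j; have := expn_gt0 2 k; lia.
Qed.

Lemma a_bitS_lo k z j : z < 2 ^ k -> j < k -> a_bit k.+1 z j = a_bit k z j.
Proof.
move=> z_lt j_lt; rewrite /a_bit -(odd_divn_expDl _ (2 ^ k - 1 - z) _ j_lt).
by congr (odd (_ %/ _)); rewrite expnS; lia.
Qed.

Lemma a_bitS_top k z : z < 2 ^ k -> a_bit k.+1 z k = true.
Proof.
move=> z_lt; rewrite /a_bit.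
have -> : 2 ^ k.+1 - 1 - z = 1 * 2 ^ k + (2 ^ k - 1 - z) by rewrite expnS; lia.
by rewrite divnMDl ?expn_gt0 // divn_small //; lia.
Qed.

Lemma a_bitS_hi k z j : z < 2 ^ k -> a_bit k.+1 (z + 2 ^ k) j = a_bit k z j.
Proof. by move=> z_lt; rewrite /a_bit; congr (odd (_ %/ _)); rewrite expnS; lia. Qed.

Lemma a_bit_inj k z z' : z < 2 ^ k -> z' < 2 ^ k ->
  (forall j, j < k -> a_bit k z j = a_bit k z' j) -> z = z'.
Proof.
move=> z_lt z'_lt bits_eq.
suff : 2 ^ k - 1 - z = 2 ^ k - 1 - z' by lia.
by apply: (@eq_low_bits k) => //; lia.
Qed.

Lemma subI_witness k c z z' : z < 2 ^ k.+1 -> z' < 2 ^ k ->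
  a_bit k.+1 z k = c -> (forall j, j < k -> a_bit k.+1 z j = a_bit k z' j) ->
  z = (if c then z' else z' + 2 ^ k).
Proof.
move=> z_lt z'_lt <- low_eq; have [z_lo|z_hi] := ltnP z (2 ^ k).
  rewrite (a_bitS_top _ _ z_lo); apply: (@a_bit_inj k) => // j j_lt.
  by rewrite -low_eq // a_bitS_lo.
have [z0 z0_lt z_eq] : exists2 z0, z0 < 2 ^ k & z = z0 + 2 ^ k.
  by exists (z - 2 ^ k); [move: z_lt; rewrite expnS; lia | rewrite subnK].
subst z; rewrite a_bitS_hi // a_bit_ge //=; congr (_ + _).
by apply: (@a_bit_inj k) => // j j_lt; rewrite -low_eq // a_bitS_hi.
Qed.

Lemma subIE k Is c i : i < 2 ^ k -> subI k Is c i = Is (if c then i else i + 2 ^ k).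
Proof.
move=> i_lt; rewrite /subI i_lt /=; apply/existsP/idP.
  case=> z /and3P [Is_z /eqP top_z /forallP low_z].
  rewrite -(subI_witness _ _ _ _ (ltn_ord z) i_lt top_z) // => j j_lt.
  exact/eqP/(low_z (Ordinal j_lt)).
have iS_lt : (if c then i else i + 2 ^ k) < 2 ^ k.+1 by case: c; rewrite expnS; lia.
move=> Is_i; exists (Ordinal iS_lt); apply/and3P; split=> //=.
  by case: c {iS_lt Is_i}; [rewrite a_bitS_top | rewrite a_bitS_hi // a_bit_ge].
apply/forallP => j; case: c {iS_lt Is_i} => /=.
  by rewrite a_bitS_lo.
by rewrite a_bitS_hi.
Qed.

Lemma decreasing_info_shift k Is i : decreasing_info k.+1 Is ->
  i < 2 ^ k -> Is i -> Is (i + 2 ^ k).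
Proof.
move=> Is_decr i_lt Is_i; apply: (Is_decr i); rewrite ?expnS //; try lia.
apply/existsP; exists (mono k.+1 (i + 2 ^ k)); rewrite /mono_le_eq eqxx /=.
apply/andP; split; last by apply/allP.
apply/subsetP => j; rewrite !inE a_bitS_hi //.
have [j_lt|j_ge] := ltnP j k; first by rewrite a_bitS_lo.
by rewrite a_bit_ge.
Qed.

Lemma sum_le_pow2_lt n (F : 'I_n -> nat) :
  (forall j : 'I_n, F j <= 2 ^ j) -> \sum_(j < n) F j < 2 ^ n.
Proof.
elim: n F => [|n IHn] F F_le; first by rewrite big_ord0.
rewrite big_ord_recr /= expnS.
have := IHn (fun j => F (widen_ord (leqnSn n) j)) (fun j => F_le _).
by have /= := F_le ord_max; lia.
Qed.

Lemma idx_lt n (v : 'cV['F_2]_n) : idx v < 2 ^ n.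
Proof. by apply: sum_le_pow2_lt => j; case: ifP. Qed.

Lemma mul_upper_tri_max k (M : 'M['F_2]_k.+1) (v : 'cV['F_2]_k.+1) :
  upper_tri M -> (mulmx M v) ord_max ord0 = v ord_max ord0.
Proof.
move=> [M_diag M_lower]; rewrite !mxE big_ord_recr /= M_diag GRing.mul1r.
by rewrite big1 ?GRing.add0r // => j _; rewrite M_lower ?GRing.mul0r /=.
Qed.

Lemma phi_upper_tri_lo k (M : 'M['F_2]_k.+1) i :
  upper_tri M -> i < 2 ^ k -> phi M i < 2 ^ k.
Proof.
move=> M_ut i_lt; rewrite /phi /idx big_ord_recr /= mul_upper_tri_max //.
rewrite mxE a_bitS_top // GRing.oner_eq0 addn0.
by apply: sum_le_pow2_lt => j; case: ifP.
Qed.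

Lemma phi_upper_tri_hi k (M : 'M['F_2]_k.+1) i :
  upper_tri M -> i < 2 ^ k -> phi M (i + 2 ^ k) = phi (topleft M) i + 2 ^ k.
Proof.
move=> M_ut i_lt; rewrite /phi /idx big_ord_recr /= mul_upper_tri_max //.
rewrite mxE a_bitS_hi // a_bit_ge // eqxx; congr (_ + _); apply: eq_bigr => j _.
rewrite !mxE big_ord_recr /= !mxE a_bitS_hi // a_bit_ge // GRing.mulr0 GRing.addr0.
by congr (if _ == _ then _ else _); apply: eq_bigr => l _; rewrite !mxE a_bitS_hi.
Qed.

Lemma SC_ext k (I J : pred nat) (y y' : nat -> R) :
  (forall i, i < 2 ^ k -> I i = J i) -> (forall i, i < 2 ^ k -> y i = y' i) ->
  SC k I y =1 SC k J y'.
Proof.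
elim: k I J y y' => [|k IHk] I J y y' IJ yy' i /=; first by rewrite IJ ?yy'.
have ul_eq : SC k I (fun j => fSC (y j) (y (j + 2 ^ k)))
          =1 SC k J (fun j => fSC (y' j) (y' (j + 2 ^ k))).
  by apply: IHk => j j_lt; rewrite ?IJ ?yy' // expnS; lia.
have ur_eq ul ul' : ul =1 ul' ->
    SC k (fun j => I (j + 2 ^ k)) (fun j => gSC (ul j) (y j) (y (j + 2 ^ k)))
 =1 SC k (fun j => J (j + 2 ^ k)) (fun j => gSC (ul' j) (y' j) (y' (j + 2 ^ k))).
  by move=> ul_ul'; apply: IHk => j j_lt; rewrite ?IJ ?ul_ul' ?yy' // expnS; lia.
by rewrite !(ur_eq _ _ ul_eq) !ul_eq.
Qed.

Lemma SC_zero k (I : pred nat) (y : nat -> R) :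
  (forall i, i < 2 ^ k -> y i = R0) -> SC k I y =1 (fun=> false).
Proof.
elim: k I y => [|k IHk] I y y0 i /=.
  by rewrite y0 //; case: (I 0) => //; case: Rle_dec => // nle; case: (nle (Rle_refl _)).
have ul0 : SC k I (fun j => fSC (y j) (y (j + 2 ^ k))) =1 (fun=> false).
  by apply: IHk => j j_lt; rewrite y0 ?fSC_0l // expnS; lia.
have ur0 : SC k (fun j => I (j + 2 ^ k))
    (fun j => gSC (SC k I (fun j => fSC (y j) (y (j + 2 ^ k))) j) (y j) (y (j + 2 ^ k)))
    =1 (fun=> false).
  apply: IHk => j j_lt; rewrite ul0 gSC_false !y0 ?Rplus_0_l //; rewrite expnS; lia.
by rewrite ul0 !ur0; case: ifP.
Qed.

Lemma SC_strict_llr k (J1 J0 : pred nat) (v L : nat -> R) :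
  (forall i, i < 2 ^ k -> J1 i -> J0 i) ->
  (forall i, i < 2 ^ k -> strict_llr (SC k J1 v i) (L i)) ->
  forall i, i < 2 ^ k -> SC k J0 L i = SC k J1 v i.
Proof.
elim: k J1 J0 v L => [|k IHk] J1 J0 v L J10 L_llr i i_lt.
  have /= := L_llr 0 isT; case J1_0: (J1 0); first rewrite (J10 0 isT J1_0).
    by case: Rle_dec => _ /=; case: Rle_dec => //= ? ?; lra.
  by case: (J0 0) => //=; case: Rle_dec => //= ? ?; lra.
have hk : 2 ^ k.+1 = 2 ^ k + 2 ^ k by rewrite expnS; lia.
set a := SC k J1 (fun j => fSC (v j) (v (j + 2 ^ k))).
set b := SC k (fun j => J1 (j + 2 ^ k)) (fun j => gSC (a j) (v j) (v (j + 2 ^ k))).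
have L_lo j : j < 2 ^ k -> strict_llr (a j (+) b j) (L j).
  by move=> j_lt; have /= := L_llr j; rewrite -/a -/b j_lt; apply; lia.
have L_hi j : j < 2 ^ k -> strict_llr (b j) (L (j + 2 ^ k)).
  move=> j_lt; have /= := L_llr (j + 2 ^ k) ltac:(lia).
  by rewrite -/a -/b ifN ?addnK // -leqNgt leq_addl.
have ul_eq j : j < 2 ^ k -> SC k J0 (fun j => fSC (L j) (L (j + 2 ^ k))) j = a j.
  apply: IHk => [l l_lt|l l_lt]; first by apply: J10; lia.
  by have := fSC_strict_llr _ _ _ _ (L_lo l l_lt) (L_hi l l_lt); rewrite -addbA addbb addbF.
have ur_eq j : j < 2 ^ k ->
  SC k (fun j => J0 (j + 2 ^ k))
    (fun j => gSC (SC k J0 (fun j => fSC (L j) (L (j + 2 ^ k))) j) (L j) (L (j + 2 ^ k))) j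
  = b j.
  apply: IHk => [l l_lt|l l_lt]; first by apply: J10; lia.
  by rewrite ul_eq //; apply: gSC_strict_llr _ _ _ _ (L_lo l l_lt) (L_hi l l_lt).
rewrite /= -/a -/b; case: ifP => [i_lo|i_hi]; first by rewrite ul_eq // ur_eq.
by rewrite ur_eq //; lia.
Qed.

Definition glue (h : nat) (a b : nat -> R) (j : nat) : R :=
  if j < h then a j else b (j - h).

Lemma glue_lo h a b j : j < h -> glue h a b j = a j.
Proof. by rewrite /glue => ->. Qed.

Lemma glue_hi h a b j : glue h a b (j + h) = b j.
Proof. by rewrite /glue ltnNge leq_addl addnK. Qed.

Lemma SC_glue k Is a b :
  let ul := SC k Is (fun j => fSC (a j) (b j)) in
  let ur := SC k (fun j => Is (j + 2 ^ k)) (fun j => gSC (ul j) (a j) (b j)) in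
  SC k.+1 Is (glue (2 ^ k) a b) =1
    fun i => if i < 2 ^ k then ul i (+) ur i else ur (i - 2 ^ k).
Proof.
move=> ul ur i /=.
have ul_eq : SC k Is (fun j => fSC (glue (2 ^ k) a b j) (glue (2 ^ k) a b (j + 2 ^ k))) =1 ul.
  by apply: SC_ext => // j j_lt; rewrite glue_lo // glue_hi.
have ur_eq : SC k (fun j => Is (j + 2 ^ k))
    (fun j => gSC (SC k Is (fun j => fSC (glue (2 ^ k) a b j) (glue (2 ^ k) a b (j + 2 ^ k))) j)
                  (glue (2 ^ k) a b j) (glue (2 ^ k) a b (j + 2 ^ k))) =1 ur.
  by apply: SC_ext => // j j_lt; rewrite ul_eq glue_lo // glue_hi.
by rewrite ul_eq !ur_eq.
Qed.

Lemma SC_glue_hi k Is a b i :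
  SC k.+1 Is (glue (2 ^ k) a b) (i + 2 ^ k) =
  SC k (fun j => Is (j + 2 ^ k))
    (fun j => gSC (SC k Is (fun j => fSC (a j) (b j)) j) (a j) (b j)) i.
Proof. by rewrite SC_glue /= ltnNge leq_addl addnK. Qed.

Lemma SC_glue_lo k Is a b i : i < 2 ^ k ->
  SC k.+1 Is (glue (2 ^ k) a b) i =
  SC k Is (fun j => fSC (a j) (b j)) i (+) SC k.+1 Is (glue (2 ^ k) a b) (i + 2 ^ k).
Proof. by move=> i_lt; rewrite SC_glue_hi SC_glue /= i_lt. Qed.

Lemma SC_glue0_hi k Is a i :
  SC k.+1 Is (glue (2 ^ k) a (fun=> R0)) (i + 2 ^ k) = SC k (fun j => Is (j + 2 ^ k)) a i.
Proof.
rewrite SC_glue_hi; apply: SC_ext => // j _.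
by rewrite SC_zero ?gSC_false ?Rplus_0_r // => l _; apply: fSC_0r.
Qed.

Lemma SC_glue0_lo k Is a i : i < 2 ^ k ->
  SC k.+1 Is (glue (2 ^ k) a (fun=> R0)) i = SC k (fun j => Is (j + 2 ^ k)) a i.
Proof.
by move=> i_lt; rewrite SC_glue_lo // SC_glue0_hi SC_zero // => l _; apply: fSC_0r.
Qed.

Lemma SC_0glue_hi k Is b i :
  SC k.+1 Is (glue (2 ^ k) (fun=> R0) b) (i + 2 ^ k) = SC k (fun j => Is (j + 2 ^ k)) b i.
Proof.
rewrite SC_glue_hi; apply: SC_ext => // j _.
by rewrite SC_zero ?gSC_false ?Rplus_0_l // => l _; apply: fSC_0l.
Qed.

Lemma SC_commute_ext k (I J : pred nat) pi :
  (forall i, i < 2 ^ k -> I i = J i) -> SC_commute k J pi -> SC_commute k I pi.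
Proof.
move=> IJ J_pi y i i_lt; have SC_IJ z : SC k I z =1 SC k J z by apply: SC_ext.
by rewrite !SC_IJ J_pi.
Qed.

Section CommutingHalves.

Variables (k : nat) (Is : pred nat) (pi pi' : nat -> nat).
Hypothesis pi_lo : forall i, i < 2 ^ k -> pi i < 2 ^ k.
Hypothesis pi_hi : forall i, i < 2 ^ k -> pi (i + 2 ^ k) = pi' i + 2 ^ k.
Hypothesis pi_SC : SC_commute k.+1 Is pi.

Local Notation Is_hi := (fun j => Is (j + 2 ^ k)).

Lemma SC_commute_glue a b i : i < 2 ^ k.+1 ->
  SC k.+1 Is (glue (2 ^ k) (fun j => a (pi j)) (fun j => b (pi' j))) i =
  SC k.+1 Is (glue (2 ^ k) a b) (pi i).
Proof.
move=> i_lt; rewrite -pi_SC //; apply: SC_ext => // j j_lt.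
have [j_lo|j_hi] := ltnP j (2 ^ k); first by rewrite !glue_lo ?pi_lo.
have [l l_lt ->] : exists2 l, l < 2 ^ k & j = l + 2 ^ k.
  by exists (j - 2 ^ k); [move: j_lt; rewrite expnS; lia | rewrite subnK].
by rewrite pi_hi // !glue_hi.
Qed.

(* Commutation at [i] and at [i + 2^k] for inputs with zero second half. *)
Lemma SC_hi_pi_pi' z i : i < 2 ^ k -> SC k Is_hi z (pi i) = SC k Is_hi z (pi' i).
Proof.
move=> i_lt; have i_ltS : i < 2 ^ k.+1 by rewrite expnS; lia.
have := SC_commute_glue z (fun=> R0) _ i_ltS.
rewrite SC_glue0_lo // SC_glue0_lo ?pi_lo // => <-.
have := SC_commute_glue z (fun=> R0) _ (_ : i + 2 ^ k < 2 ^ k.+1).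
by rewrite SC_glue0_hi pi_hi // SC_glue0_hi => ->; rewrite // expnS; lia.
Qed.

Lemma SC_hi_commute : SC_commute k Is_hi pi'.
Proof.
move=> v i i_lt; have := SC_commute_glue (fun=> R0) v _ (_ : i + 2 ^ k < 2 ^ k.+1).
by rewrite SC_0glue_hi pi_hi // SC_0glue_hi => ->; rewrite // expnS; lia.
Qed.

Lemma SC_lo_glue_commute a b i : i < 2 ^ k ->
  SC k Is (fun j => fSC (a (pi j)) (b (pi' j))) i = SC k Is (fun j => fSC (a j) (b j)) (pi i).
Proof.
move=> i_lt; have i_ltS : i < 2 ^ k.+1 by rewrite expnS; lia.
have hi_eq : SC k.+1 Is (glue (2 ^ k) (fun j => a (pi j)) (fun j => b (pi' j))) (i + 2 ^ k)
           = SC k.+1 Is (glue (2 ^ k) a b) (pi i + 2 ^ k).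
  rewrite SC_commute_glue ?pi_hi ?SC_glue_hi ?SC_hi_pi_pi' //; rewrite expnS; lia.
apply: (@addIb (SC k.+1 Is (glue (2 ^ k) a b) (pi i + 2 ^ k))).
rewrite -SC_glue_lo ?pi_lo // -hi_eq -SC_glue_lo //.
exact: SC_commute_glue.
Qed.

Hypothesis pi'_lt : forall i, i < 2 ^ k -> pi' i < 2 ^ k.
Hypothesis Is_shift : forall i, i < 2 ^ k -> Is i -> Is (i + 2 ^ k).

(* Re-encode the decisions of [Is] as LLRs, which the decoder of the larger
   set [Is_hi] decodes back to the same decisions. *)
Lemma SC_lo_pi_pi' v i : i < 2 ^ k -> SC k Is v (pi i) = SC k Is v (pi' i).
Proof.
move=> i_lt; pose L j := if SC k Is v j then Ropp R1 else R1.
have L_dec : forall j, j < 2 ^ k -> SC k Is_hi L j = SC k Is v j.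
  by apply: SC_strict_llr => // j _; rewrite /L /strict_llr; case: (SC k Is v j); lra.
by rewrite -!L_dec ?pi_lo ?pi'_lt // SC_hi_pi_pi'.
Qed.

(* Every LLR vector [v] is [fSC T w] for a large constant [T]. *)
Lemma SC_lo_commute : SC_commute k Is pi'.
Proof.
move=> v i i_lt; pose T := abs_ub v (2 ^ k); pose w j := fSC_inv T (v j).
have fTw j : j < 2 ^ k -> fSC T (w j) = v j.
  by move=> j_lt; apply: fSC_invK; apply: abs_ub_gt.
have lhs_eq : SC k Is (fun j => v (pi' j)) =1 SC k Is (fun j => fSC T (w (pi' j))).
  by apply: SC_ext => // j j_lt; rewrite fTw ?pi'_lt.
have rhs_eq : SC k Is v =1 SC k Is (fun j => fSC T (w j)).
  by apply: SC_ext => // j j_lt; rewrite fTw.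
rewrite lhs_eq -SC_lo_pi_pi' // rhs_eq.
exact: (SC_lo_glue_commute (fun=> T) w _ i_lt).
Qed.

End CommutingHalves.

Theorem lemma3 (k : nat) (Is : pred nat) (M : 'M['F_2]_k.+1) :
  info_set k.+1 Is ->
  decreasing_info k.+1 Is ->
  upper_tri M ->
  is_aut k.+1 Is (phi M) ->
  SC_commute k.+1 Is (phi M) ->
  SC_commute k (subI k Is true) (phi (topleft M)) /\
  SC_commute k (subI k Is false) (phi (topleft M)).
Proof.
move=> _ Is_decr M_ut _ M_SC.
have pi_lo i : i < 2 ^ k -> phi M i < 2 ^ k by apply: phi_upper_tri_lo.
have pi_hi i : i < 2 ^ k -> phi M (i + 2 ^ k) = phi (topleft M) i + 2 ^ k.
  exact: phi_upper_tri_hi.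
have pi'_lt i : i < 2 ^ k -> phi (topleft M) i < 2 ^ k by move=> _; apply: idx_lt.
have Is_shift i : i < 2 ^ k -> Is i -> Is (i + 2 ^ k).
  exact: decreasing_info_shift.
split.
  apply: (@SC_commute_ext k _ Is _ (subIE k Is true)).
  by apply: (@SC_lo_commute _ _ (phi M)).
apply: (@SC_commute_ext k _ (fun i => Is (i + 2 ^ k)) _ (subIE k Is false)).
by apply: (@SC_hi_commute _ _ (phi M)).
Qed.
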